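(* Let $G=\bigsqcup_{i=1}^t K_{n_i}$ be a disjoint union of complete graphs with $t\ge1$ and all $n_i\ge1$. Then \[ \mathcal{K}^{\mathsf{TS}}(G)=\{1\}\cup\{k\ge2:\ n_i\in\{1,k+1\}\text{ for every } i\}. \]
   Context: All graphs are finite, simple, undirected. A $k$-clique of a graph $H$ is a set of $k$ pairwise adjacent vertices. For a graph $H$ and integer $k\ge1$, the Token Sliding graph $\mathsf{TS}_k(H)$ has as vertices the $k$-cliques of $H$, and two $k$-cliques $A,B$ are adjacent iff $A\setminus B=\{u\}$, $B\setminus A=\{v\}$ for some vertices $u,v$ with $uv\in E(H)$. For a graph $G$, $\mathcal{K}^{\mathsf{TS}}(G)=\{k\ge1:\ \exists H,\ \mathsf{TS}_k(H)\cong G\}$. *)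

From mathcomp Require Import all_boot.
Set Implicit Arguments. Unset Strict Implicit. Unset Printing Implicit Defensive.

Definition simple_graph (T : finType) (e : rel T) : Prop :=
  symmetric e /\ irreflexive e.

Definition is_clique (T : finType) (e : rel T) (A : {set T}) : bool :=
  [forall x in A, forall y in A, (x != y) ==> e x y].

Definition TSV (T : finType) (e : rel T) (k : nat) : finType :=
  {A : {set T} | is_clique e A && (#|A| == k)}.

Definition TS_rel (T : finType) (e : rel T) (k : nat) : rel (TSV e k) :=
  fun A B => [exists u : T, exists v : T,
     [&& (val A :\: val B == [set u]), (val B :\: val A == [set v]) & e u v]].

Arguments TS_rel {T} e k _ _.

Definition graph_iso (V1 V2 : finType) (e1 : rel V1) (e2 : rel V2) : Prop :=
  exists f : V1 -> V2, bijective f /\ forall x y, e1 x y = e2 (f x) (f y).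

Definition KTS (V : finType) (g : rel V) (k : nat) : Prop :=
  1 <= k /\ exists (T : finType) (e : rel T),
    simple_graph e /\ graph_iso (TS_rel e k) g.

Arguments graph_iso {V1 V2} e1 e2.
Arguments KTS {V} g k.

(* Disjoint union of complete graphs K_{n 0}, ..., K_{n (t-1)}. *)
Definition cliques_vertex (t : nat) (n : 'I_t -> nat) : finType :=
  {i : 'I_t & 'I_(n i)}.

Definition cliques_rel (t : nat) (n : 'I_t -> nat) : rel (cliques_vertex n) :=
  fun x y => (tag x == tag y) && (x != y).

Arguments cliques_rel {t} n _ _.

From mathcomp Require Import all_boot.
Set Implicit Arguments. Unset Strict Implicit. Unset Printing Implicit Defensive.

(* For k >= 2, if A and B are adjacent in TS_k(H) then A :|: B is a
   (k+1)-clique whose k-subsets are pairwise adjacent.  When the component of A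
   in TS_k(H) is complete, it consists of exactly these k-subsets: a member D
   leaving A :|: B shares a token c with A (as k >= 2), and then D and the
   k-subset missing c differ in two tokens.  So every non-trivial component of
   G has k+1 vertices.  Conversely a disjoint union of copies of K_k and
   K_(k+1) realises G, since TS_k(K_k) = K_1 and TS_k(K_(k+1)) = K_(k+1);
   for k = 1, TS_1(G) is G itself. *)

Lemma inj_surj_bij (T T' : finType) (f : T -> T') :
  injective f -> (forall y, exists x, f x = y) -> bijective f.
Proof.
move=> f_inj f_surj; apply: inj_card_bij => //.
rewrite -(card_codom f_inj); apply/subset_leq_card/subsetP => y _.
by have [x <-] := f_surj y; apply: codom_f.
Qed.

Lemma graph_isoS (V1 V2 : finType) (e1 : rel V1) (e2 : rel V2) :
  graph_iso e1 e2 -> graph_iso e2 e1.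
Proof.
case=> f [[g fK gK] fe]; exists g; split; first by exists f.
by move=> x y; rewrite fe !gK.
Qed.

Lemma subset_card_setD1 (T : finType) (S A : {set T}) k :
  #|S| = k.+1 -> A \subset S -> #|A| = k -> exists2 a, a \in S & A = S :\ a.
Proof.
move=> cS AS cA; have /cards1P[a Da] : #|S :\: A| == 1 by rewrite cardsDS // cS cA subSnn.
have aS : a \in S by have := set11 a; rewrite -Da inE => /andP[].
by exists a; rewrite // -Da setDDr setDv set0U; apply/esym/setIidPr.
Qed.

Section Cliques.
Variables (T : finType) (e : rel T).

Lemma cliqueP (S : {set T}) :
  reflect {in S &, forall x y, x != y -> e x y} (is_clique e S).
Proof.
apply: (iffP forall_inP) => [H x y xS yS | H x xS].
  by move/forall_inP: (H x xS) => /(_ y yS) /implyP.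
by apply/forall_inP => y yS; apply/implyP; apply: H.
Qed.

Lemma clique_subset (S A : {set T}) : is_clique e S -> A \subset S -> is_clique e A.
Proof.
move=> /cliqueP clS /subsetP AS; apply/cliqueP => x y xA yA; apply: clS; exact: AS.
Qed.

End Cliques.

Section TokenSliding.
Variables (T : finType) (e : rel T) (k : nat).
Hypothesis e_sym : symmetric e.

Lemma TSV_clique (A : TSV e k) : is_clique e (val A).
Proof. by case/andP: (valP A). Qed.

Lemma card_TSV (A : TSV e k) : #|val A| = k.
Proof. by case/andP: (valP A) => _ /eqP. Qed.

Lemma TS_relP (A B : TSV e k) :
  reflect (exists u v, [/\ val A :\: val B = [set u], val B :\: val A = [set v] & e u v])
          (TS_rel e k A B).
Proof.
apply: (iffP existsP) => [[u /existsP[v /and3P[/eqP AB /eqP BA euv]]] | [u [v [AB BA euv]]]].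
  by exists u, v.
by exists u; apply/existsP; exists v; rewrite AB BA !eqxx.
Qed.

Lemma TS_rel_in_clique (S : {set T}) (A B : TSV e k) :
  is_clique e S -> #|S| = k.+1 -> val A \subset S -> val B \subset S -> A != B ->
  TS_rel e k A B.
Proof.
move=> /cliqueP clS cS AS BS AB.
have [a aS Aa] := subset_card_setD1 cS AS (card_TSV A).
have [b bS Bb] := subset_card_setD1 cS BS (card_TSV B).
have ab : a != b by apply: contraNneq AB => eab; rewrite -val_eqE /= Aa Bb eab.
have setD1D1 x y : y \in S -> y != x -> (S :\ x) :\: (S :\ y) = [set y].
  move=> yS yx; apply/setP=> z; rewrite !inE.
  by case: (eqVneq z y) => [->|]; rewrite ?yx ?yS //=; case: (z \in S); rewrite ?andbF.
apply/TS_relP; exists b, a; rewrite Aa Bb !setD1D1 // 1?eq_sym //.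
by split=> //; rewrite e_sym clS // eq_sym.
Qed.
Lemma TS_rel_setU_clique (A B : TSV e k) :
  TS_rel e k A B -> is_clique e (val A :|: val B) /\ #|val A :|: val B| = k.+1.
Proof.
case/TS_relP=> u [v [AB BA euv]].
have [vB vA] : v \in val B /\ v \notin val A.
  by have := set11 v; rewrite -BA inE => /andP[].
have AUB : val A :|: val B = v |: val A.
  apply/setP=> z; rewrite !inE; case: (boolP (z \in val A)) => zA; rewrite /= ?orbT ?orbF //.
  by apply/idP/eqP => [zB | ->//]; apply/set1P; rewrite -BA inE zA zB.
have BorA z : z \in val A -> z \in val B \/ z = u.
  move=> zA; case: (boolP (z \in val B)) => zB; [by left | right].
  by apply/set1P; rewrite -AB inE zA zB.
rewrite AUB cardsU1 vA card_TSV; split=> //.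
have /cliqueP clA := TSV_clique A; have /cliqueP clB := TSV_clique B.
apply/cliqueP=> x y; rewrite !inE.
case/predU1P=> [-> | xA] /predU1P[-> | yA]; rewrite ?eqxx // => xy.
- by case: (BorA y yA) => [yB | ->]; [apply: clB | rewrite e_sym].
- by case: (BorA x xA) => [xB | ->]; [apply: clB | ].
- exact: clA.
Qed.

Lemma card_TSV_subset (S : {set T}) :
  is_clique e S -> #|[set D : TSV e k | val D \subset S]| = 'C(#|S|, k).
Proof.
move=> clS; rewrite -cards_draws -(card_imset _ val_inj).
congr #|pred_of_set _|; apply/setP=> X; rewrite inE.
apply/imsetP/andP => [[D] | [XS /eqP cX]].
  by rewrite inE => DS ->; rewrite DS card_TSV.
have XV : is_clique e X && (#|X| == k) by rewrite cX eqxx (clique_subset clS).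
by exists (exist _ X XV); rewrite ?inE.
Qed.
Lemma TS_rel_leaving_clique (S : {set T}) (A D : TSV e k) :
  1 < k -> is_clique e S -> #|S| = k.+1 -> val A \subset S ->
  TS_rel e k D A -> ~~ (val D \subset S) ->
  exists2 E : TSV e k, val E \subset S & (D != E) && ~~ TS_rel e k D E.
Proof.
move=> k_gt1 clS cS AS /TS_relP[u [_ [DA _ _]]] /subsetPn[w wD wS].
have wA : w \notin val A by apply: contra wS; apply: (subsetP AS).
have DAw : val D :\: val A = [set w].
  by rewrite DA; congr [set _]; apply/esym/set1P; rewrite -DA inE wA.
have /card_gt0P[c /setIP[cD cA]] : 0 < #|val D :&: val A|.
  have := cardsID (val A) (val D); rewrite DAw cards1 card_TSV => DAk.
  by rewrite lt0n; apply: contraTneq k_gt1 => DA0; rewrite -DAk DA0.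
have cS' : c \in S by apply: (subsetP AS).
have EV : is_clique e (S :\ c) && (#|S :\ c| == k).
  rewrite (clique_subset clS (subD1set S c)) /=.
  by move: (cardsD1 c S); rewrite cS' cS add1n => -[<-].
exists (exist _ (S :\ c) EV); first exact: subD1set.
have wE : w \notin S :\ c by rewrite inE negb_and wS orbT.
apply/andP; split; first by apply: contraNneq wE => /(congr1 val) /= <-.
(* D would lose both w and c when sliding to S :\ c. *)
apply/TS_relP => -[u' [_ [DE _ _]]].
have wu' : w = u' by apply/set1P; rewrite -DE inE wE wD.
have cu' : c = u' by apply/set1P; rewrite -DE !inE eqxx cD.
by move: wS; rewrite wu' -cu' cS'.
Qed.

Lemma card_TS_complete_component (C : {set TSV e k}) (A B : TSV e k) :
  1 < k ->
  {in C &, forall D E, D != E -> TS_rel e k D E} ->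
  (forall D E, D \in C -> TS_rel e k D E -> E \in C) ->
  A \in C -> B \in C -> A != B -> #|C| = k.+1.
Proof.
move=> k_gt1 C_complete C_closed AC BC AB.
have [clS cS] := TS_rel_setU_clique (C_complete A B AC BC AB).
set S := val A :|: val B in clS cS.
have AS : val A \subset S := subsetUl _ _.
have subS_in_C (D : TSV e k) : val D \subset S -> D \in C.
  case: (eqVneq D A) => [-> // | DA] DS.
  by apply: (C_closed A D AC (TS_rel_in_clique clS cS AS DS _)); rewrite eq_sym.
have C_subS (D : TSV e k) : D \in C -> val D \subset S.
  move=> DC; apply: contraT => DS.
  have DA : D != A by apply: contraNneq DS => ->.
  have [E /subS_in_C EC /andP[DE]] :=
    TS_rel_leaving_clique k_gt1 clS cS AS (C_complete D A DC AC DA) DS.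
  by rewrite C_complete.
have -> : C = [set D : TSV e k | val D \subset S].
  by apply/setP=> D; rewrite inE; apply/idP/idP => [/C_subS | /subS_in_C].
by rewrite card_TSV_subset // cS binSn.
Qed.

End TokenSliding.

Section TokenSlidingOne.
Variables (T : finType) (e : rel T).
Hypothesis e_irr : irreflexive e.

Lemma set1_TSV1 (x : T) : is_clique e [set x] && (#|[set x]| == 1).
Proof.
by rewrite cards1 eqxx andbT; apply/cliqueP => a b /set1P-> /set1P->; rewrite eqxx.
Qed.

Definition TSV1 (x : T) : TSV e 1 := exist _ [set x] (set1_TSV1 x).

Lemma TSV1_bij : bijective TSV1.
Proof.
apply: inj_surj_bij => [x y /(congr1 val) /set1_inj // | A].
have /andP[_ /cards1P[x Ax]] := valP A; exists x.
by apply/eqP; rewrite -val_eqE /= Ax.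
Qed.

Lemma TS_rel_TSV1 (x y : T) : TS_rel e 1 (TSV1 x) (TSV1 y) = e x y.
Proof.
apply/TS_relP/idP => [[u [v [/= xy yx euv]]] | exy].
  have : u \in [set x] :\: [set y] by rewrite xy set11.
  have : v \in [set y] :\: [set x] by rewrite yx set11.
  by rewrite !inE => /andP[_ /eqP <-] /andP[_ /eqP <-].
have xy : x != y by apply: contraTneq exy => ->; rewrite e_irr.
by exists x, y; rewrite /= !(setDidPl _) ?disjoints1 ?inE // eq_sym.
Qed.

Lemma TS1_iso : graph_iso (TS_rel e 1) e.
Proof.
by apply: graph_isoS; exists TSV1; split; [apply: TSV1_bij | move=> x y; rewrite TS_rel_TSV1].
Qed.

End TokenSlidingOne.

Section DisjointCliques.
Variables (t : nat) (n : 'I_t -> nat).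

Lemma cliques_simple : simple_graph (cliques_rel n).
Proof.
split=> [x y | x]; last by rewrite /cliques_rel !eqxx.
by rewrite /cliques_rel eq_sym (eq_sym x).
Qed.

Lemma card_cliques_tag i (P : pred nat) :
  #|[set z : cliques_vertex n | (tag z == i) && P (val (tagged z))]| =
  #|[set j : 'I_(n i) | P j]|.
Proof.
have Tagged_inj : injective (Tagged (fun i => 'I_(n i)) (i := i)).
  by move=> a b ab; apply: eq_from_Tagged ab.
rewrite -(card_imset _ Tagged_inj); apply: eq_card => -[j c]; rewrite !inE /=.
case: (eqVneq j i) => [<- | ji] /=.
  apply/idP/imsetP => [Pc | [d]]; first by exists c; rewrite ?inE.
  by rewrite inE => Pd cd; rewrite (eq_from_Tagged cd).
by apply/esym/negbTE/imsetP => -[d _ /(congr1 tag)] /= eji; rewrite eji eqxx in ji.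
Qed.

Definition component i : {set cliques_vertex n} := [set z | tag z == i].

Lemma card_component i : #|component i| = n i.
Proof.
have := card_cliques_tag i xpredT; rewrite cardsT card_ord => <-.
by apply: eq_card => z; rewrite !inE andbT.
Qed.

Lemma clique_component i : is_clique (cliques_rel n) (component i).
Proof. by apply/cliqueP => x y /[!inE] /eqP tx /eqP ty; rewrite /cliques_rel tx ty eqxx. Qed.

Lemma TS_iso_cliques_size (T : finType) (e : rel T) k :
  symmetric e -> 1 < k -> graph_iso (TS_rel e k) (cliques_rel n) ->
  forall i, 1 < n i -> n i = k.+1.
Proof.
move=> e_sym k_gt1 [f [[g fK gK] fe]] i ni_gt1.
pose C := f @^-1: component i.
have <- : #|C| = n i.
  by rewrite /C -(can2_imset_pre _ gK fK) card_imset ?card_component //; apply: can_inj gK.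
have ni_gt0 : 0 < n i := ltnW ni_gt1.
pose x0 : cliques_vertex n := Tagged (fun i => 'I_(n i)) (Ordinal ni_gt0).
pose x1 : cliques_vertex n := Tagged (fun i => 'I_(n i)) (Ordinal ni_gt1).
apply: (card_TS_complete_component e_sym (A := g x0) (B := g x1)) => //.
- move=> D E /[!inE] /eqP fD /eqP fE DE; rewrite fe /cliques_rel fD fE eqxx /=.
  by apply: contra DE => /eqP /(can_inj fK) ->.
- by move=> D E /[!inE] /eqP <-; rewrite fe /cliques_rel eq_sym => /andP[].
- by rewrite !inE gK.
- by rewrite !inE gK.
- have x01 : x0 != x1 by rewrite eq_Tagged -val_eqE.
  by apply: contraNneq x01 => /(can_inj gK).
Qed.

End DisjointCliques.

Lemma card_ord_neq M r : #|[set j : 'I_M | val j != r]| = M - (r < M).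
Proof.
case: (ltnP r M) => [r_lt | r_ge].
  rewrite subn1 -[M in RHS]card_ord -(cardsC1 (Ordinal r_lt)).
  by apply: eq_card => j; rewrite !inE -val_eqE.
rewrite subn0 -[RHS]card_ord -cardsT; apply: eq_card => j; rewrite !inE.
by apply: contraTneq (ltn_ord j) => ->; rewrite -leqNgt.
Qed.

Lemma ord_size1_eq m (a b : 'I_m) : m = 1 -> a = b.
Proof. by move=> m1; subst m; rewrite !ord1. Qed.

Section Realisation.
Variables (t : nat) (n : 'I_t -> nat) (k : nat).
Hypotheses (k_gt1 : 1 < k) (n_spec : forall i, n i = 1 \/ n i = k.+1).

Definition host_size i := if n i == 1 then k else n i.

Lemma host_sizeE i : n i != 1 -> host_size i = n i.
Proof. by rewrite /host_size => /negbTE->. Qed.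

Lemma host_size_neq1 i : n i != 1 -> host_size i = k.+1.
Proof. by move=> ni1; rewrite host_sizeE //; case: (n_spec i) ni1 => ->. Qed.

(* A vertex of a [K_1] component is sent to the whole [K_k] component of the
   host (the omitted index [k] is out of range); vertex [a] of a [K_(k+1)]
   component is sent to that component with [a] removed. *)
Definition omitted (x : cliques_vertex n) : nat :=
  if n (tag x) == 1 then k else val (tagged x).

Definition slice (x : cliques_vertex n) : {set cliques_vertex host_size} :=
  [set z | (tag z == tag x) && (val (tagged z) != omitted x)].

Lemma slice_tag x z : z \in slice x -> tag z = tag x.
Proof. by rewrite inE => /andP[/eqP]. Qed.

Lemma slice_sub_component x : slice x \subset component host_size (tag x).
Proof. by apply/subsetP => z /slice_tag; rewrite inE => ->. Qed.

Lemma slice_TSV_spec x :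
  is_clique (cliques_rel host_size) (slice x) && (#|slice x| == k).
Proof.
rewrite (clique_subset (clique_component _ _) (slice_sub_component x)) /=.
rewrite /slice (card_cliques_tag _ _ (fun j => j != omitted x)) card_ord_neq.
rewrite /omitted /host_size; case: ifP => [_ | ni1]; first by rewrite ltnn subn0.
by rewrite ltn_ord subn1; case: (n_spec (tag x)) => ni; rewrite ?ni ?eqxx in ni1 *.
Qed.

Definition slice_TSV x : TSV (cliques_rel host_size) k :=
  exist _ (slice x) (slice_TSV_spec x).

Lemma slice_inj : injective slice_TSV.
Proof.
move=> x y /(congr1 val) /= xy.
have /card_gt0P[z zx] : 0 < #|slice x|.
  by have /andP[_ /eqP->] := slice_TSV_spec x; apply: ltnW.
have tyx : tag y = tag x by rewrite -(slice_tag zx) (@slice_tag y z) // -xy.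
case: x y tyx xy {zx} => i a [j b] /= eji; subst j => xy; congr Tagged.
case: (eqVneq (n i) 1) => [ni1 | ni_neq1]; first exact: ord_size1_eq.
apply/val_inj/eqP.
have b_lt : val b < host_size i by rewrite host_sizeE // ltn_ord.
pose w : cliques_vertex host_size := Tagged _ (Ordinal b_lt).
have w_notin : w \in slice (Tagged (fun i => 'I_(n i)) b) = false.
  by rewrite inE /= eqxx /omitted /= (negbTE ni_neq1) eqxx.
apply: contraFT w_notin => ab.
by rewrite -xy inE /= eqxx /omitted /= (negbTE ni_neq1) eq_sym.
Qed.

Lemma slice_surj (D : TSV (cliques_rel host_size) k) : exists x, slice_TSV x = D.
Proof.
have /cliqueP clD := TSV_clique D.
have /card_gt0P[z0 z0D] : 0 < #|val D| by rewrite card_TSV ltnW.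
set i := tag z0.
have D_sub : val D \subset component host_size i.
  apply/subsetP => z zD; rewrite inE; case: (eqVneq z z0) => [-> // | zz0].
  by have := clD z z0 zD z0D zz0; rewrite /cliques_rel => /andP[].
case: (eqVneq (n i) 1) => [ni1 | ni_neq1].
  have ni_gt0 : 0 < n i by rewrite ni1.
  have hi : host_size i = k by rewrite /host_size ni1.
  exists (Tagged (fun i => 'I_(n i)) (Ordinal ni_gt0)); apply/eqP; rewrite -val_eqE /=.
  have -> : val D = component host_size i.
    by apply/eqP; rewrite eqEcard D_sub card_component card_TSV hi leqnn.
  apply/eqP/setP => -[j c]; rewrite !inE /omitted /= ni1 eqxx andb_idr // => /eqP ji.
  by subst j; rewrite neq_ltn -hi ltn_ord.
have [[j c] /[!inE] /= /eqP ji Da] :=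
  subset_card_setD1 (etrans (card_component _ i) (host_size_neq1 ni_neq1)) D_sub (card_TSV D).
subst j; have c_lt : val c < n i by rewrite -(host_sizeE ni_neq1) ltn_ord.
exists (Tagged (fun i => 'I_(n i)) (Ordinal c_lt)); apply/eqP; rewrite -val_eqE /= Da.
apply/eqP/setP => -[j d]; rewrite !inE /omitted /= (negbTE ni_neq1).
case: (eqVneq j i) => [ji | _]; last by rewrite andbF.
by subst j; rewrite eq_Tagged andbT.
Qed.

Lemma TS_rel_slice x y :
  TS_rel (cliques_rel host_size) k (slice_TSV x) (slice_TSV y) = cliques_rel n x y.
Proof.
apply/idP/idP => [/TS_relP[u [v [xy yx euv]]] | /andP[/eqP txy xy]].
  have /setDP[/slice_tag tu _] : u \in slice x :\: slice y by rewrite xy set11.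
  have /setDP[/slice_tag tv _] : v \in slice y :\: slice x by rewrite yx set11.
  move: euv; rewrite /cliques_rel tu tv => /andP[-> _] /=.
  by apply/eqP => exy; move: xy; rewrite /= exy setDv => /setP/(_ u); rewrite !inE eqxx.
have ni_neq1 : n (tag x) != 1.
  apply: contra xy; case: x y txy => i a [j b] /= ij; subst j => /eqP ni1.
  by apply/eqP; congr Tagged; apply: ord_size1_eq.
apply: (TS_rel_in_clique (cliques_simple _).1 (clique_component _ (tag x))).
- by rewrite card_component host_size_neq1.
- exact: slice_sub_component.
- by rewrite txy slice_sub_component.
- by rewrite (inj_eq slice_inj).
Qed.

Lemma TS_slice_iso : graph_iso (TS_rel (cliques_rel host_size) k) (cliques_rel n).
Proof.
apply: graph_isoS; exists slice_TSV; split; last by move=> x y; rewrite TS_rel_slice.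
exact: inj_surj_bij slice_inj slice_surj.
Qed.

End Realisation.

Theorem proposition3p4 (t : nat) (n : 'I_t -> nat)
  (ht : 1 <= t) (hn : forall i, 1 <= n i) (k : nat) :
  KTS (cliques_rel n) k <->
  (k = 1 \/ (2 <= k /\ forall i, n i = 1 \/ n i = k.+1)).
Proof.
split=> [[k_gt0 [T [e [[e_sym _] iso]]]] | [-> | [k_gt1 n_spec]]].
- case: (ltngtP k 1) => [| k_gt1 | -> ]; [by rewrite ltnNge k_gt0 | right | by left].
  split=> // i; case: (ltngtP (n i) 1) => [| ni_gt1 | ]; [by rewrite ltnNge hn | right | by left].
  exact: TS_iso_cliques_size e_sym k_gt1 iso i ni_gt1.
- split=> //; exists (cliques_vertex n), (cliques_rel n).
  by split; [apply: cliques_simple | apply: TS1_iso; case: (cliques_simple n)].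
- split; first exact: ltnW.
  exists (cliques_vertex (host_size n k)), (cliques_rel (host_size n k)).
  by split; [apply: cliques_simple | apply: TS_slice_iso].
Qed.
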